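(* Let $n$ and $k$ be positive integers with $k\ge2$ and $n\ge2k+1$. Then $B_2(n,k,k+1;3)\ge 2^{n-2k+1}$.
   Context: For a prime power $q$, $\mathcal{G}_q(n,k)$ denotes the set of all $k$-dimensional subspaces of $\mathbb{F}_q^n$. An $\alpha$-$(n,k,\delta)_q^c$ covering Grassmannian code is a subset $\mathcal{C}\subseteq\mathcal{G}_q(n,k)$ (no repeated codewords) such that every set of $\alpha$ distinct codewords of $\mathcal{C}$ spans a subspace of $\mathbb{F}_q^n$ of dimension at least $k+\delta$. $B_q(n,k,\delta;\alpha)$ denotes the maximum size of an $\alpha$-$(n,k,\delta)_q^c$ code. *)

From HB Require Import structures.
From mathcomp Require Import all_boot all_algebra.
Set Implicit Arguments. Unset Strict Implicit. Unset Printing Implicit Defensive.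
Import GRing.Theory.

(* A code is a duplicate-free list of subspaces (i.e. a finite set of
   subspaces).  alpha-(n,k,delta)^c covering Grassmannian code: every
   codeword has dimension k, and any alpha distinct codewords span a
   subspace of dimension >= k + delta. *)
Definition covering_code (F : fieldType) (n k delta alpha : nat)
    (C : seq {vspace 'rV[F]_n}) : Prop :=
  [/\ uniq C,
      (forall U, U \in C -> \dim U = k) &
      (forall s : seq {vspace 'rV[F]_n}, uniq s -> size s = alpha ->
          {subset s <= C} -> k + delta <= \dim (\sum_(U <- s) U)%VS)].

(* "B_q(n,k,delta;alpha) >= m": since B_q is the maximum size of such a
   code (over a finite field there are finitely many codes), this holds
   iff some code of size at least m exists. *)
Definition B_ge (F : fieldType) (n k delta alpha m : nat) : Prop :=
  exists C : seq {vspace 'rV[F]_n}, @covering_code F n k delta alpha C /\ m <= size C.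

(** A polynomial w of degree at most n - 2k gives the k-dimensional "graph"
    subspace U_w = {(u, u w) : deg u < k} of F^k x F^(n-k) = F^n.  Distinct
    graphs meet trivially, so U_b + U_c has dimension 2k.  If U_a lay inside
    U_b + U_c, testing u = 1 and u = X^(k-1) would give a - b = v (c - b) and
    X^(k-1) (a - b) = v X^(k-1) (c - b) with deg (v X^(k-1)) < k, forcing v to
    be a constant; over F_2 that constant is 0 or 1, i.e. a = b or a = c.
    Hence any three distinct graphs span at least 2k + 1 dimensions, and there
    are 2^(n-2k+1) of them. *)
From mathcomp Require Import all_boot all_algebra zify ring.
Set Implicit Arguments. Unset Strict Implicit. Unset Printing Implicit Defensive.
Import GRing.Theory.
Local Open Scope ring_scope.

Lemma ltn_dimv_addl (K : fieldType) (vT : vectType K) (U V : {vspace vT}) :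
  ~~ (U <= V)%VS -> (\dim V < \dim (U + V))%N.
Proof.
by rewrite (ltn_leqif (dimv_leqif_sup (addvSr U V))) subv_add subvv andbT.
Qed.

Lemma rVpoly_sumX (R : nzSemiRingType) (d : nat) (y : 'rV[R]_d) :
  rVpoly y = \sum_(i < d) y 0 i *: 'X^i.
Proof.
rewrite {1}(row_sum_delta y) linear_sum; apply: eq_bigr => i _.
by rewrite linearZ; congr (_ *: _); apply: rVpoly_delta.
Qed.

Section GraphSpace.

Variables (F : fieldType) (n k : nat).
Hypothesis k2_le_n : (2 * k <= n)%N.

Definition row_of_polys (p q : {poly F}) : 'rV[F]_n :=
  \row_(j < n) if (j < k)%N then p`_j else q`_(j - k).

Lemma row_of_polysD (p q p' q' : {poly F}) :
  row_of_polys p q + row_of_polys p' q' = row_of_polys (p + p') (q + q').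
Proof. by apply/rowP => j; rewrite !mxE !coefD; case: ifP. Qed.

Lemma row_of_polys0 : row_of_polys 0 0 = 0.
Proof. by apply/rowP => j; rewrite !mxE !coef0; case: ifP. Qed.

Lemma row_of_polys_inj (p q p' q' : {poly F}) :
    (size p <= k)%N -> (size p' <= k)%N ->
    (size q <= n - k)%N -> (size q' <= n - k)%N ->
  row_of_polys p q = row_of_polys p' q' -> p = p' /\ q = q'.
Proof.
move=> sp sp' sq sq' /rowP E; split; apply/polyP => i.
- have [ik | ki] := ltnP i k; last by rewrite !nth_default ?(leq_trans sp, leq_trans sp').
  have i_lt_n : (i < n)%N by lia.
  by move: (E (Ordinal i_lt_n)); rewrite !mxE /= ik.
- have [ink | nki] := ltnP i (n - k); last by rewrite !nth_default ?(leq_trans sq, leq_trans sq').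
  have ik_lt_n : (i + k < n)%N by lia.
  move: (E (Ordinal ik_lt_n)); rewrite !mxE /= addnK.
  by have -> : (i + k < k)%N = false by lia.
Qed.

Definition graph_mx (w : {poly F}) : 'M[F]_(k, n) :=
  \matrix_(i, j) row_of_polys 'X^i ('X^i * w) 0 j.

Lemma mul_graph_mx (w : {poly F}) (y : 'rV[F]_k) :
  y *m graph_mx w = row_of_polys (rVpoly y) (rVpoly y * w).
Proof.
apply/rowP => j; rewrite !mxE rVpoly_sumX mulr_suml; under eq_bigr do rewrite !mxE.
by case: ifP => _; rewrite coef_sum; apply: eq_bigr => i _; rewrite -?scalerAl coefZ.
Qed.

Definition graph_map (w : {poly F}) : 'Hom('rV[F]_k, 'rV[F]_n) :=
  linfun (mulmxr (graph_mx w)).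

Definition graph_space (w : {poly F}) : {vspace 'rV[F]_n} := (graph_map w @: fullv)%VS.

Lemma graph_spaceP (w : {poly F}) (x : 'rV[F]_n) :
  reflect (exists2 u : {poly F}, (size u <= k)%N & x = row_of_polys u (u * w))
          (x \in graph_space w).
Proof.
apply: (iffP memv_imgP) => [[y _ ->] | [u su ->]].
  by exists (rVpoly y); rewrite ?size_poly // lfunE /= mul_graph_mx.
by exists (poly_rV u); rewrite ?memvf // lfunE /= mul_graph_mx poly_rV_K.
Qed.

Definition admissible : pred {poly F} := fun w => (size w <= n - 2 * k + 1)%N.

Lemma size_mul_admissible (u w : {poly F}) :
  w \in admissible -> (size u <= k)%N -> (size (u * w)%R <= n - k)%N.
Proof.
rewrite unfold_in => sw su; apply: leq_trans (size_polyMleq _ _) _.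
move: sw su; lia.
Qed.

Lemma dim_graph_space (w : {poly F}) : w \in admissible -> \dim (graph_space w) = k.
Proof.
move=> aw; have lker0 : lker (graph_map w) = 0%VS.
  apply/eqP; apply/lker0P => y y'; rewrite !lfunE /= !mul_graph_mx.
  case/row_of_polys_inj; rewrite ?size_mul_admissible ?size_poly //.
  by move=> /(can_inj rVpolyK).
by rewrite limg_dim_eq ?lker0 ?capv0 // dimvf dim_matrix mul1r.
Qed.

Lemma graph_space_inj : (0 < k)%N -> {in admissible &, injective graph_space}.
Proof.
move=> k_gt0 a b aa ab Eab.
have : row_of_polys 1 (1 * a) \in graph_space b.
  by rewrite -Eab; apply/graph_spaceP; exists 1; rewrite ?size_poly1.
case/graph_spaceP => u su /row_of_polys_inj [].
- by rewrite size_poly1.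
- by [].
- by rewrite size_mul_admissible ?size_poly1.
- by rewrite size_mul_admissible.
by move=> <-; rewrite !mul1r.
Qed.

Lemma graph_space_disjoint (b c : {poly F}) :
  b \in admissible -> c \in admissible -> b != c ->
  (graph_space b :&: graph_space c)%VS = 0%VS.
Proof.
move=> ab ac bc; apply/eqP; rewrite -subv0; apply/subvP => x /memv_capP[].
case/graph_spaceP => u su -> /graph_spaceP[v sv].
case/row_of_polys_inj; rewrite ?size_mul_admissible // => <- Euv.
have : u * (b - c) == 0 by rewrite mulrBr Euv subrr.
rewrite mulf_eq0 subr_eq0 (negbTE bc) orbF => /eqP ->.
by rewrite mul0r row_of_polys0 memv0.
Qed.

Lemma graph_row_in_sum (a b c u : {poly F}) :
    a \in admissible -> b \in admissible -> c \in admissible -> (size u <= k)%N ->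
  row_of_polys u (u * a) \in (graph_space b + graph_space c)%VS ->
  exists2 v : {poly F}, (size v <= k)%N & u * (a - b) = v * (c - b).
Proof.
move=> aa ab ac su /memv_addP[_ /graph_spaceP[ub sub ->] [_ /graph_spaceP[uc suc ->]]].
rewrite row_of_polysD; case/row_of_polys_inj.
- by [].
- by rewrite (leq_trans (size_polyD _ _)) // geq_max sub suc.
- by rewrite size_mul_admissible.
- by rewrite (leq_trans (size_polyD _ _)) // geq_max !size_mul_admissible.
by move=> Eu Eua; exists uc => //; rewrite mulrBr Eua Eu; ring.
Qed.

Lemma graph_space_sub_sum (a b c : {poly F}) :
    (0 < k)%N -> a \in admissible -> b \in admissible -> c \in admissible -> b != c ->
  (graph_space a <= graph_space b + graph_space c)%VS ->
  exists l : F, a - b = l%:P * (c - b).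
Proof.
move=> k_gt0 aa ab ac bc /subvP sub_abc.
have in_sum (u : {poly F}) :
    (size u <= k)%N -> row_of_polys u (u * a) \in (graph_space b + graph_space c)%VS.
  by move=> su; apply: sub_abc; apply/graph_spaceP; exists u.
have s1 : (size (1%R : {poly F}) <= k)%N by rewrite size_poly1.
have [v0 _ E0] := graph_row_in_sum aa ab ac s1 (in_sum _ s1).
have sXk : (size ('X^(k.-1) : {poly F})%R <= k)%N by rewrite size_polyXn prednK.
have [v1 sv1 E1] := graph_row_in_sum aa ab ac sXk (in_sum _ sXk).
have cb_neq0 : c - b != 0 by rewrite subr_eq0 eq_sym.
have Ev1 : v1 = v0 * 'X^(k.-1).
  by apply: (mulIf cb_neq0); rewrite -E1 -[a - b]mul1r E0 mulrCA mulrA.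
have sv0 : (size v0 <= 1)%N.
  have [-> | v0_neq0] := eqVneq v0 0; first by rewrite size_poly0.
  by move: sv1; rewrite Ev1 size_mulXn //; lia.
by exists v0`_0; rewrite -size1_polyC // -E0 mul1r.
Qed.

Lemma dim_graph_space_sum3 (a b c : {poly F}) :
    (0 < k)%N -> a \in admissible -> b \in admissible -> c \in admissible -> b != c ->
    (forall l : F, a - b != l%:P * (c - b)) ->
  (k + k.+1 <= \dim (graph_space a + (graph_space b + graph_space c)))%N.
Proof.
move=> k_gt0 aa ab ac bc not_multiple.
have dim_bc : \dim (graph_space b + graph_space c) = (k + k)%N.
  by rewrite dimv_disjoint_sum ?graph_space_disjoint ?dim_graph_space.
rewrite addnS -dim_bc; apply: ltn_dimv_addl; apply/negP => sub_abc.
by have [l /eqP] := graph_space_sub_sum k_gt0 aa ab ac bc sub_abc; apply/negP.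
Qed.

End GraphSpace.

Lemma F2_not_scalar_multiple (a b c : {poly 'F_2}) :
  a != b -> a != c -> forall l : 'F_2, a - b != l%:P * (c - b).
Proof.
move=> ab ac l; have /orP[] : (l == 0) || (l == 1) by case: l => [[|[|[]]]].
- by move=> /eqP ->; rewrite mul0r subr_eq0.
- by move=> /eqP ->; rewrite mul1r; apply: contra ac => /eqP /addIr ->.
Qed.

Definition graph_code (F : finFieldType) (n k : nat) : seq {vspace 'rV[F]_n} :=
  [seq graph_space n k (rVpoly t) | t : 'rV[F]_(n - 2 * k + 1)].

Lemma rVpoly_admissible (F : fieldType) (n k : nat) (t : 'rV[F]_(n - 2 * k + 1)) :
  rVpoly t \in admissible n k.
Proof. by rewrite unfold_in size_poly. Qed.

Lemma graph_code_covering (n k : nat) :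
  (0 < k)%N -> (2 * k + 1 <= n)%N -> @covering_code 'F_2 n k k.+1 3 (graph_code 'F_2 n k).
Proof.
move=> k_gt0 k2_lt_n; have k2_le_n : (2 * k <= n)%N by lia.
have adm := @rVpoly_admissible 'F_2 n k.
split.
- rewrite map_inj_uniq ?enum_uniq // => s t.
  by move=> /(graph_space_inj k2_le_n k_gt0 (adm s) (adm t)) /(can_inj rVpolyK).
- by move=> _ /imageP[t _ ->]; apply: dim_graph_space.
case=> [|A [|B [|C []]]] //=; rewrite !inE !negb_or andbT => /andP[/andP[AB AC] BC] _.
move=> sub_code; rewrite !big_cons big_nil addv0.
have [ta _ eA] := imageP (sub_code A (mem_head _ _)).
have [tb _ eB] := imageP (sub_code B ltac:(by rewrite !inE eqxx orbT)).
have [tc _ eC] := imageP (sub_code C ltac:(by rewrite !inE eqxx !orbT)).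
have neq_poly (s t : 'rV['F_2]_(n - 2 * k + 1)) :
  graph_space n k (rVpoly s) != graph_space n k (rVpoly t) -> rVpoly s != rVpoly t.
  by apply: contra => /eqP ->.
subst A B C.
apply: (dim_graph_space_sum3 k2_le_n k_gt0 (adm ta) (adm tb) (adm tc) (neq_poly _ _ BC)).
exact: F2_not_scalar_multiple (neq_poly _ _ AB) (neq_poly _ _ AC).
Qed.

Close Scope ring_scope.

Theorem mainTheorem8 (n k : nat) :
  0 < n -> 2 <= k -> 2 * k + 1 <= n ->
  @B_ge 'F_2 n k k.+1 3 (2 ^ (n - 2 * k + 1)).
Proof.
move=> _ k_ge2 k2_lt_n; exists (graph_code 'F_2 n k); split.
  by apply: graph_code_covering => //; apply: leq_trans k_ge2.
by rewrite size_image card_mx card_Fp // mul1n.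
Qed.
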